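(* Let $\Sigma$ be a finite ranked set (arities $\ge1$), $X$ a ranked set and $G\in\mathsf{V}X$. Then there is an operation $f$, taking an arity-respecting $X$-indexed family of models (for each $x\in X$, a model in the image of $\lfloor\cdot\rfloor$ on elements of $\mathsf{V}\Sigma$ of the arity of $x$) to a model, which is compatible with counting MSO and satisfies $f\big((\lfloor\eta(x)\rfloor)_{x\in X}\big)=\lfloor[\![G]\!](\eta)\rfloor$ (up to isomorphism) for every arity-preserving valuation $\eta:X\to\mathsf{V}\Sigma$.
   Context: Here a ranked set is a set whose elements have arities in $\{1,2,\dots\}$. A corner of a ranked set $V$ is $v[i]$ with $v\in V$, $1\le i\le$ arity of $v$. For $n\ge1$, an $n$-ary $\mathsf{V}$-hypergraph with ports over $\Sigma$ consists of a nonempty finite ranked set of hypervertices, an arity-preserving labelling by $\Sigma$, a binary directed edge relation on corners, and a total port function from corners to $\{1,\dots,n\}$ (corners mapped to $i$ are $i$-ports). $\mathsf{V}\Sigma$ denotes these up to isomorphism. Flattening of $K\in\mathsf{V}\mathsf{V}\Sigma$: hypervertices are pairs $(v,w)$, $v$ a hypervertex of $K$, $w$ a hypervertex of the label of $v$ (label and arity from $w$); arity that of $K$; if $w[i]$ is a $j$-port in the label of $v$ and $v[j]$ is a $k$-port in $K$, then $(v,w)[i]$ is a $k$-port; an edge $(v,w)[i]\to(v',w')[i']$ exists iff $v=v'$ and $w[i]\to w'[i']$ in the label of $v$, or $v[j]\to v'[j']$ in $K$ with $j,j'$ the port numbers of $w[i]$, $w'[i']$ in the labels of $v,v'$. $[\![G]\!](\eta)$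 is the flattening of $G$ with each label $x$ replaced by $\eta(x)$. For $K\in\mathsf{V}\Sigma$, the model $\lfloor K\rfloor$ has as universe the corners of the hypervertices, a binary relation for edges, for each $a\in\Sigma$ and $i\le$ arity of $a$ a unary relation selecting the $i$-th corners of hypervertices labelled $a$, and for each $i\le$ arity of $K$ a unary relation for the $i$-ports. Counting MSO (extended syntax) is MSO with predicates $|Y|\equiv k\bmod m$ (true iff $Y$ finite of size $\equiv k$ mod $m$), a set-inclusion predicate, a singleton predicate, and set constants $[\psi]$ for each quantifier-free formula $\psi(x)$ with one free variable; quantifier rank counts first- and second-order quantifiers alike. Two models are $(r,M)$-equivalent if they satisfy the same such sentences of quantifier rank at most $r$ using moduli only from $M\subseteq\mathbb{N}$. An operation on families of models is compatible with counting MSO if for all $r\in\mathbb{N}$ and $M\subseteq\mathbb{N}$, componentwise $(r,M)$-equivalent inputs give $(r,M)$-equivalent outputs. *)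

From mathcomp Require Import all_boot.
Set Implicit Arguments. Unset Strict Implicit. Unset Printing Implicit Defensive.

(** Corner [v[i]] (1 <= i <= arity v) is represented as [existT v i'] with
    [i' : 'I_(arity v)] (0-based).  Ports [1..n] are represented by ['I_n]. *)
Definition cornerT (V : Type) (S : Type) (ar : S -> nat) (lab : V -> S) :=
  {v : V & 'I_(ar (lab v))}.

Record hg (S : Type) (ar : S -> nat) (n : nat) := HG {
  hv : finType;
  hv_wit : hv;
  hlab : hv -> S;
  hedge : cornerT ar hlab -> cornerT ar hlab -> bool;
  hport : cornerT ar hlab -> 'I_n }.

Definition corner S ar n (K : @hg S ar n) : finType := cornerT ar (@hlab S ar n K).

Section Flatten.
Variables (Sig : finType) (arS : Sig -> nat) (X : Type) (arX : X -> nat) (n : nat).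
Variables (G : hg arX n) (eta : forall x : X, hg arS (arX x)).

Definition fhv : finType := {v : hv G & hv (eta (hlab v))}.
Definition fwit : fhv := existT _ (hv_wit G) (hv_wit (eta (hlab (hv_wit G)))).
Definition flab (p : fhv) : Sig := hlab (tagged p).

Definition fsplit (c : cornerT arS flab) : {v : hv G & corner (eta (hlab v))} :=
  existT _ (tag (tag c)) (existT _ (tagged (tag c)) (tagged c)).

(* port number of w[i] in eta(lab v), seen as a corner v[j] of G *)
Definition gcorner (s : {v : hv G & corner (eta (hlab v))}) : corner G :=
  existT _ (tag s) (hport (tagged s)).

Definition fedge (c c' : cornerT arS flab) : bool :=
  let s := fsplit c in let s' := fsplit c' in
  ((tag s == tag s') && hedge (tagged s) (tagged_as s s'))
  || hedge (gcorner s) (gcorner s').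

Definition fport (c : cornerT arS flab) : 'I_n := hport (gcorner (fsplit c)).

Definition hflatten : hg arS n := @HG Sig arS n fhv fwit flab fedge fport.
End Flatten.

Record model (U : Type) := Model {
  mu : finType;
  mE : mu -> mu -> bool;
  mP : U -> mu -> bool }.
Arguments mE {U} A _ _ : rename.
Arguments mP {U} A _ _ : rename.
Arguments mu {U} A : rename.

(** unary predicate symbols of [floor K] for [K] of arity [n]:
    [inl (a, i)] selects the i-th corners of hypervertices labelled a,
    [inr k] selects the k-ports. *)
Definition sigU (Sig : finType) (arS : Sig -> nat) (n : nat) : Type :=
  ({a : Sig & 'I_(arS a)} + 'I_n)%type.

Definition floor (Sig : finType) (arS : Sig -> nat) n (K : hg arS n)
  : model (sigU arS n) :=
  @Model _ (corner K) (@hedge _ _ _ K)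
    (fun (u : sigU arS n) (c : corner K) => match u with
     | inl ai => (hlab (tag c) == tag ai) && (nat_of_ord (tagged c) == nat_of_ord (tagged ai))
     | inr k => hport c == k end).

Definition miso U (A B : model U) : Prop :=
  exists h : mu A -> mu B, bijective h /\
    (forall x y, mE B (h x) (h y) = mE A x y) /\
    (forall u x, mP B u (h x) = mP A u x).

Section MSO.
Variable U : Type.

(* quantifier-free formulas psi(x) in the single first-order variable x *)
Inductive qf1 :=
| QTrue | QE | QP of U | QNot of qf1 | QAnd of qf1 & qf1.

Inductive sterm := SVar of nat | SConst of qf1.

Inductive form :=
| FE of nat & nat
| FP of U & nat
| FEq of nat & nat
| FIn of nat & sterm
| FMod of nat & nat & sterm
| FSub of sterm & sterm
| FSing of sterm
| FNot of form
| FAnd of form & form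
| FEx1 of nat & form
| FEx2 of nat & form.

Fixpoint qr (f : form) : nat :=
  match f with
  | FNot g => qr g
  | FAnd g h => maxn (qr g) (qr h)
  | FEx1 _ g | FEx2 _ g => (qr g).+1
  | _ => 0
  end.

Fixpoint mods_in (M : nat -> Prop) (f : form) : Prop :=
  match f with
  | FMod _ m _ => M m
  | FNot g => mods_in M g
  | FAnd g h => mods_in M g /\ mods_in M h
  | FEx1 _ g | FEx2 _ g => mods_in M g
  | _ => True
  end.

Definition sbound (b2 : nat -> bool) (Y : sterm) : bool :=
  match Y with SVar X => b2 X | SConst _ => true end.

(* all free variables of f are among b1 (first-order) / b2 (second-order) *)
Fixpoint wsc (b1 b2 : nat -> bool) (f : form) : bool :=
  match f with
  | FE x y | FEq x y => b1 x && b1 y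
  | FP _ x => b1 x
  | FIn x Y => b1 x && sbound b2 Y
  | FMod _ _ Y | FSing Y => sbound b2 Y
  | FSub Y Z => sbound b2 Y && sbound b2 Z
  | FNot g => wsc b1 b2 g
  | FAnd g h => wsc b1 b2 g && wsc b1 b2 h
  | FEx1 x g => wsc (fun z => (z == x) || b1 z) b2 g
  | FEx2 X g => wsc b1 (fun z => (z == X) || b2 z) g
  end.

Definition sentence (f : form) : bool := wsc (fun _ => false) (fun _ => false) f.

Variable A : model U.

Fixpoint qsat (t : mu A) (p : qf1) : bool :=
  match p with
  | QTrue => true
  | QE => mE A t t
  | QP u => mP A u t
  | QNot q => ~~ qsat t q
  | QAnd q r => qsat t q && qsat t r
  end.

Definition sval (e2 : nat -> {set mu A}) (Y : sterm) : {set mu A} :=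
  match Y with SVar X => e2 X | SConst p => [set t | qsat t p] end.

Fixpoint sat (e1 : nat -> option (mu A)) (e2 : nat -> {set mu A}) (f : form)
  : Prop :=
  match f with
  | FE x y => match e1 x, e1 y with Some a, Some b => mE A a b | _, _ => False end
  | FP u x => match e1 x with Some a => mP A u a | None => False end
  | FEq x y => match e1 x, e1 y with Some a, Some b => a = b | _, _ => False end
  | FIn x Y => match e1 x with Some a => a \in sval e2 Y | None => False end
  | FMod k m Y => #|sval e2 Y| = k %[mod m]
  | FSub Y Z => sval e2 Y \subset sval e2 Z
  | FSing Y => #|sval e2 Y| = 1
  | FNot g => ~ sat e1 e2 g
  | FAnd g h => sat e1 e2 g /\ sat e1 e2 h
  | FEx1 x g => exists t : mu A,
      sat (fun z => if z == x then Some t else e1 z) e2 g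
  | FEx2 X g => exists S : {set mu A},
      sat e1 (fun z => if z == X then S else e2 z) g
  end.

Definition holds (f : form) : Prop := sat (fun _ => None) (fun _ => set0) f.
End MSO.

Definition rM_equiv U (r : nat) (M : nat -> Prop) (A B : model U) : Prop :=
  forall f : form U, sentence f -> qr f <= r -> mods_in M f ->
    (holds A f <-> holds B f).

(** A model is in the image of floor on elements of V Sigma of arity k
    (up to isomorphism, since V Sigma consists of isomorphism classes). *)
Definition in_floor_image (Sig : finType) (arS : Sig -> nat) (k : nat)
  (A : model (sigU arS k)) : Prop :=
  exists K : hg arS k, miso A (floor K).

(* The operation glues component models along G: its elements are pairs (v, c) of a
   hypervertex v of G and an element c of the model at the label of v; besides the edges
   inside components, a j-port of component v is joined to a j'-port of component v' whenever
   v[j] -> v'[j'] in G, and the k-ports are the j-ports of components v with v[j] a k-port of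
   G.  On floors this is the floor of the flattening, up to reassociating pairs.
   Compatibility is a Feferman-Vaught argument, valid for arbitrary component models: the truth
   of a formula of rank <= r in the glued model under an assignment only depends on the
   (r, M)-types of the components under the restricted assignments.  Atoms reduce to rank-0
   facts about the components (set cardinalities add up over components, so the modular and
   singleton predicates reduce too), and quantifiers are handled by the back-and-forth property
   of (r+1, M)-equivalence, which holds because over a finite model the formulas separating a
   witness from every candidate can be conjoined into a single one. *)

From Pilot Require Import Defs.
From mathcomp Require Import all_boot zify.
From Stdlib Require Import Classical FunctionalExtensionality Setoid.
From Stdlib Require Import IndefiniteDescription ChoiceFacts.
Set Implicit Arguments. Unset Strict Implicit. Unset Printing Implicit Defensive.

Notation fo_env C := (nat -> option (mu C)).
Notation so_env C := (nat -> {set mu C}).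

Definition upd (T : Type) (e : nat -> T) (x : nat) (a : T) : nat -> T :=
  fun z => if z == x then a else e z.

Section CountingMSO.
Variable U : Type.
Implicit Types (C D : model U) (f g : form U).

Definition QFalse : qf1 U := QNot (QTrue U).
Definition QOr (q q' : qf1 U) : qf1 U := QNot (QAnd (QNot q) (QNot q')).
Definition bigor (s : seq (qf1 U)) : qf1 U := foldr QOr QFalse s.
Definition FFalse : form U := FSing (SConst QFalse).

Lemma qsat_bigor C t s : qsat (A:=C) t (bigor s) = has (qsat t) s.
Proof. by elim: s => //= q s IH; rewrite negb_and !negbK IH. Qed.

Lemma qsat_bigor_enum C t (T : finType) (P : pred T) (F : T -> qf1 U) :
  qsat (A:=C) t (bigor [seq F i | i <- enum T & P i]) = [exists i, P i && qsat t (F i)].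
Proof.
rewrite qsat_bigor has_map; apply/hasP/existsP => [[i]|[i /andP[Pi Fi]]].
  by rewrite mem_filter => /andP[Pi _] Fi; exists i; rewrite Pi.
by exists i; rewrite // mem_filter Pi mem_enum.
Qed.

Lemma sat_FFalse C e1 e2 : ~ sat (A:=C) e1 e2 FFalse.
Proof. by rewrite /= cards0. Qed.

(* Under [sat], an atom with an unassigned first-order variable is false and an unassigned set
   variable denotes the empty set; [close] builds this in for the variables outside [b1], [b2]. *)
Definition close_sterm (b2 : nat -> bool) (Y : sterm U) : sterm U :=
  if Y is SVar X then (if b2 X then Y else SConst QFalse) else Y.

Fixpoint close (b1 b2 : nat -> bool) f : form U :=
  match f with
  | FE x y => if b1 x && b1 y then f else FFalse
  | FP _ x => if b1 x then f else FFalse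
  | FEq x y => if b1 x && b1 y then f else FFalse
  | FIn x Y => if b1 x then FIn x (close_sterm b2 Y) else FFalse
  | FMod k m Y => FMod k m (close_sterm b2 Y)
  | FSub Y Z => FSub (close_sterm b2 Y) (close_sterm b2 Z)
  | FSing Y => FSing (close_sterm b2 Y)
  | FNot g => FNot (close b1 b2 g)
  | FAnd g h => FAnd (close b1 b2 g) (close b1 b2 h)
  | FEx1 x g => FEx1 x (close (fun z => (z == x) || b1 z) b2 g)
  | FEx2 X g => FEx2 X (close b1 (fun z => (z == X) || b2 z) g)
  end.

Definition mask1 C (b1 : nat -> bool) (e1 : fo_env C) : fo_env C :=
  fun z => if b1 z then e1 z else None.
Definition mask2 C (b2 : nat -> bool) (e2 : so_env C) : so_env C :=
  fun z => if b2 z then e2 z else set0.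

Lemma qr_close b1 b2 f : qr (close b1 b2 f) = qr f.
Proof.
elim: f b1 b2 => [x y|u x|x y|x Y|k m Y|Y Z|Y|g IH|g IH h IH'|x g IH|X g IH] b1 b2 /=;
  by [case: ifP | rewrite ?IH ?IH'].
Qed.

Lemma mods_in_close M b1 b2 f : mods_in M f -> mods_in M (close b1 b2 f).
Proof.
elim: f b1 b2 => [x y|u x|x y|x Y|k m Y|Y Z|Y|g IH|g IH h IH'|x g IH|X g IH] b1 b2 /=;
  by [case: ifP | case=> /IH ? /IH' ? | apply: IH | ].
Qed.

Lemma sbound_close_sterm b2 Y : sbound b2 (close_sterm b2 Y).
Proof. by case: Y => [X|q] //=; case: ifP => /=. Qed.

Lemma wsc_close b1 b2 f : wsc b1 b2 (close b1 b2 f).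
Proof.
elim: f b1 b2 => [x y|u x|x y|x Y|k m Y|Y Z|Y|g IH|g IH h IH'|x g IH|X g IH] b1 b2 /=;
  by [case: ifP => //= ->; rewrite ?sbound_close_sterm | rewrite !sbound_close_sterm
      | apply: IH | rewrite IH IH'].
Qed.

Lemma sval_close_sterm C b2 (e2 : so_env C) Y :
  Defs.sval (mask2 b2 e2) Y = Defs.sval e2 (close_sterm b2 Y).
Proof. by case: Y => [X|q] //=; rewrite /mask2; case: ifP. Qed.

Lemma sat_close C b1 b2 (e1 : fo_env C) e2 f :
  sat (mask1 b1 e1) (mask2 b2 e2) f <-> sat e1 e2 (close b1 b2 f).
Proof.
elim: f b1 b2 e1 e2 => [x y|u x|x y|x Y|k m Y|Y Z|Y|g IH|g IH h IH'|x g IH|X g IH] b1 b2 e1 e2 /=;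
  rewrite ?sval_close_sterm ?IH ?IH' //.
- rewrite /mask1; case: (b1 x); case: (b1 y); rewrite /= ?cards0;
    by [exact: iff_refl | split=> //; case: (e1 x)].
- by rewrite /mask1; case: (b1 x); rewrite /= ?cards0.
- rewrite /mask1; case: (b1 x); case: (b1 y); rewrite /= ?cards0;
    by [exact: iff_refl | split=> //; case: (e1 x)].
- by rewrite /mask1; case: (b1 x); rewrite /= ?cards0.
- have mask_upd t :
      upd (mask1 b1 e1) x (Some t) = mask1 (fun z => (z == x) || b1 z) (upd e1 x (Some t)).
    by apply: functional_extensionality => z; rewrite /upd /mask1; case: (z == x).
  by setoid_rewrite mask_upd; setoid_rewrite IH.
- have mask_upd S : upd (mask2 b2 e2) X S = mask2 (fun z => (z == X) || b2 z) (upd e2 X S).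
    by apply: functional_extensionality => z; rewrite /upd /mask2; case: (z == X).
  by setoid_rewrite mask_upd; setoid_rewrite IH.
Qed.

Definition sat_equiv M r C D (e1 : fo_env C) (e2 : so_env C) (d1 : fo_env D) (d2 : so_env D) :=
  forall f, qr f <= r -> mods_in M f -> (sat e1 e2 f <-> sat d1 d2 f).

Section Equivalence.
Variables (M : nat -> Prop) (r : nat) (C D : model U).

Lemma separating_formula (e1 : fo_env C) (e2 : so_env C) (I : finType)
    (ds1 : I -> fo_env D) (ds2 : I -> so_env D) :
  (forall i, ~ sat_equiv M r e1 e2 (ds1 i) (ds2 i)) ->
  exists f, [/\ qr f <= r, mods_in M f, sat e1 e2 f & forall i, ~ sat (ds1 i) (ds2 i) f].
Proof.
move=> neqv.
have sep i : exists f, [/\ qr f <= r, mods_in M f, sat e1 e2 f & ~ sat (ds1 i) (ds2 i) f].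
  apply: NNPP => nsep; apply: (neqv i) => f fr fM.
  split=> sf; apply: NNPP => nsf; apply: nsep; [exists f | exists (FNot f)]; by split.
suff [f [fr fM sf nf]] : exists f, [/\ qr f <= r, mods_in M f, sat e1 e2 f
    & forall i, i \in enum I -> ~ sat (ds1 i) (ds2 i) f].
  by exists f; split=> // i; apply: nf; rewrite mem_enum.
elim: (enum I) => [|i s [f [fr fM sf nf]]].
  by exists (FNot FFalse); split=> //; apply: sat_FFalse.
have [g [gr gM sg ng]] := sep i.
exists (FAnd g f); split=> //=; first by rewrite geq_max gr fr.
by move=> j; rewrite inE => /orP[/eqP-> | /nf nfj] [].
Qed.

Variables (e1 : fo_env C) (e2 : so_env C) (d1 : fo_env D) (d2 : so_env D).

Lemma sat_equiv_sym : sat_equiv M r e1 e2 d1 d2 -> sat_equiv M r d1 d2 e1 e2.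
Proof. by move=> eqv f fr fM; apply: iff_sym; apply: eqv. Qed.

Lemma sat_equivS : sat_equiv M r.+1 e1 e2 d1 d2 -> sat_equiv M r e1 e2 d1 d2.
Proof. by move=> eqv f fr; apply: eqv; apply: leqW. Qed.

Lemma sat_equiv_forget1 x :
  sat_equiv M r e1 e2 d1 d2 -> sat_equiv M r (upd e1 x None) e2 (upd d1 x None) d2.
Proof.
move=> eqv f fr fM.
have forget (B : model U) (b1 : fo_env B) b2 :
    sat (upd b1 x None) b2 f <-> sat b1 b2 (close (fun z => z != x) xpredT f).
  rewrite -sat_close; suff -> : upd b1 x None = mask1 (fun z => z != x) b1 by [].
  by apply: functional_extensionality => z; rewrite /upd /mask1; case: (z == x).
by rewrite !forget; apply: eqv; [rewrite qr_close | apply: mods_in_close].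
Qed.

Lemma sat_equiv_ex1 x (t : mu C) :
  sat_equiv M r.+1 e1 e2 d1 d2 ->
  exists t' : mu D, sat_equiv M r (upd e1 x (Some t)) e2 (upd d1 x (Some t')) d2.
Proof.
move=> eqv; apply: NNPP => /not_ex_all_not neqv.
have [f [fr fM sf nf]] :=
  separating_formula (ds1 := fun t' => upd d1 x (Some t')) (ds2 := fun=> d2) neqv.
have /(eqv (FEx1 x f) fr fM) [t' sf'] : sat e1 e2 (FEx1 x f) by exists t.
exact: nf sf'.
Qed.

Lemma sat_equiv_ex2 X (S : {set mu C}) :
  sat_equiv M r.+1 e1 e2 d1 d2 ->
  exists T : {set mu D}, sat_equiv M r e1 (upd e2 X S) d1 (upd d2 X T).
Proof.
move=> eqv; apply: NNPP => /not_ex_all_not neqv.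
have [f [fr fM sf nf]] := separating_formula (ds1 := fun=> d1) (ds2 := upd d2 X) neqv.
have /(eqv (FEx2 X f) fr fM) [T sf'] : sat e1 e2 (FEx2 X f) by exists S.
exact: nf sf'.
Qed.

End Equivalence.

Lemma rM_equiv_sat_equiv M r C D :
  rM_equiv r M C D ->
  sat_equiv M r ((fun=> None) : fo_env C) (fun=> set0) ((fun=> None) : fo_env D) (fun=> set0).
Proof.
move=> eqv f fr fM.
have closed (B : model U) :
    sat ((fun=> None) : fo_env B) (fun=> set0) f <-> holds B (close xpred0 xpred0 f).
  exact: (sat_close xpred0 xpred0 (fun=> None) (fun=> set0)).
by rewrite !closed; apply: eqv; [exact: wsc_close | rewrite qr_close | exact: mods_in_close].
Qed.

End CountingMSO.

Lemma card_set_tagged (I : finType) (T_ : I -> finType) (S : {set {i : I & T_ i}}) :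
  #|S| = \sum_i #|[set c : T_ i | Tagged T_ c \in S]|.
Proof.
rewrite -sum1_card.
transitivity (\sum_i \sum_(c in [set c : T_ i | Tagged T_ c \in S]) 1).
  rewrite (sig_big_dep xpredT (fun i c => c \in [set c : T_ i | Tagged T_ c \in S])
    (fun _ _ => 1)) /=.
  by apply: eq_bigl => -[i c]; rewrite /= inE.
by apply: eq_bigr => i _; rewrite sum1_card.
Qed.

Section Glue.
Variables (Sig : finType) (arS : Sig -> nat) (X : Type) (arX : X -> nat) (n : nat).
Variables (G : hg arX n) (A : forall x : X, model (sigU arS (arX x))).

Definition component (v : hv G) : finType := mu (A (hlab v)).
Definition glue_elt : finType := {v : hv G & component v}.

Local Notation port v j := (existT _ v j : corner G).

Definition glue_edge (p p' : glue_elt) : bool :=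
  (tag p == tag p') && mE _ (tagged p) (tagged_as p p')
  || [exists j, exists j', [&& mP _ (inr j) (tagged p), mP _ (inr j') (tagged p')
                             & hedge (port (tag p) j) (port (tag p') j')]].

Definition glue_pred (u : sigU arS n) (p : glue_elt) : bool :=
  match u with
  | inl ai => mP _ (inl ai) (tagged p)
  | inr k => [exists j, mP _ (inr j) (tagged p) && (hport (port (tag p) j) == k)]
  end.

Definition glue : model (sigU arS n) := Model glue_edge glue_pred.

Definition proj v (p : glue_elt) : option (component v) := [pick c | Tagged component c == p].

Variant proj_spec v (p : glue_elt) : option (component v) -> Type :=
| ProjSome (c : component v) : p = Tagged component c -> @proj_spec v p (Some c)
| ProjNone : tag p != v -> @proj_spec v p None.
Arguments proj_spec : clear implicits.

Lemma projP v p : proj_spec v p (proj v p).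
Proof.
rewrite /proj; case: pickP => [c /eqP <- | nc]; constructor => //.
by case: p nc => w c nc; apply/eqP => /= ewv; subst w; move: (nc c); rewrite eqxx.
Qed.

Lemma proj_tagged v (c : component v) : proj v (Tagged component c) = Some c.
Proof.
case: projP => [c' /(congr1 (tagged_as (Tagged component c)))|]; last by rewrite eqxx.
by rewrite !tagged_asE => ->.
Qed.

Lemma proj_tagged_neq w v (c : component v) : w != v -> proj w (Tagged component c) = None.
Proof. by case: projP => // c' /(congr1 tag) /= -> /negPf; rewrite eqxx. Qed.

Lemma ex_proj (P : forall v, component v -> Prop) p :
  (exists v, if proj v p is Some c then P v c else False) <-> P (tag p) (tagged p).
Proof.
split=> [[v] | ]; first by case: projP => // c ->.
by case: p => v c; exists v; rewrite proj_tagged.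
Qed.

Definition restr1 v (e1 : fo_env glue) : fo_env (A (hlab v)) :=
  fun z => obind (proj v) (e1 z).
Definition restr2 v (e2 : so_env glue) : so_env (A (hlab v)) :=
  fun z => [set c | Tagged component c \in e2 z].

Lemma restr2_set0 v : restr2 v (fun=> set0) = fun=> set0.
Proof. by apply: functional_extensionality => z; apply/setP => c; rewrite !inE. Qed.

Lemma restr1_upd v e1 x p :
  restr1 v (upd e1 x (Some p)) = upd (restr1 v e1) x (proj v p).
Proof. by apply: functional_extensionality => z; rewrite /restr1 /upd; case: (z == x). Qed.

Lemma restr2_upd v e2 Z S :
  restr2 v (upd e2 Z S) = upd (restr2 v e2) Z [set c | Tagged component c \in S].
Proof. by apply: functional_extensionality => z; rewrite /restr2 /upd; case: (z == Z). Qed.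

Local Notation Uv v := (sigU arS (arX (hlab v))).

Fixpoint qf_at v (q : qf1 (sigU arS n)) : qf1 (Uv v) :=
  match q with
  | QTrue => QTrue _
  (* a loop at (v, c) is a loop at c or a G-edge between two ports of v carried by c *)
  | QE => QOr (QE _) (bigor [seq QAnd (QP (inr jj.1 : Uv v)) (QP (inr jj.2 : Uv v))
            | jj <- enum {: 'I_(arX (hlab v)) * 'I_(arX (hlab v))}
            & hedge (port v jj.1) (port v jj.2)])
  | QP (inl ai) => QP (inl ai : Uv v)
  | QP (inr k) => bigor [seq QP (inr j : Uv v) | j <- enum 'I_(arX (hlab v))
                                            & hport (port v j) == k]
  | QNot q => QNot (qf_at v q)
  | QAnd q q' => QAnd (qf_at v q) (qf_at v q')
  end.

Lemma qsat_qf_at v (c : component v) q :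
  qsat (A:=glue) (Tagged component c) q = qsat (A:=A (hlab v)) c (qf_at v q).
Proof.
elim: q => [|||q IH|q IH q' IH'] //=; last 2 first.
- by rewrite IH.
- by rewrite IH IH'.
- rewrite negb_and !negbK qsat_bigor_enum /glue_edge /= eqxx tagged_asE /=; congr orb.
  apply/existsP/existsP => [[j /existsP[j' /and3P[Pj Pj' e]]] | [[j j'] /and3P[e Pj Pj']]].
    by exists (j, j'); rewrite /= e Pj Pj'.
  by exists j; apply/existsP; exists j'; rewrite Pj Pj' e.
- case=> [ai|k] //=; rewrite qsat_bigor_enum; apply: eq_existsb => j; exact: andbC.
Qed.

Definition sterm_at v (Y : sterm (sigU arS n)) : sterm (Uv v) :=
  match Y with SVar Z => SVar _ Z | SConst q => SConst (qf_at v q) end.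

Definition sat_at v e1 e2 (g : form (Uv v)) := sat (restr1 v e1) (restr2 v e2) g.
Arguments sat_at : clear implicits.

Section Decomposition.
Variables (e1 : fo_env glue) (e2 : so_env glue).

Lemma sval_sterm_at v Y :
  Defs.sval (restr2 v e2) (sterm_at v Y) =
  [set c | Tagged component c \in Defs.sval (A:=glue) e2 Y].
Proof. by case: Y => [Z|q] //=; apply/setP => c; rewrite !inE qsat_qf_at. Qed.

Lemma card_sval_glue Y :
  #|Defs.sval (A:=glue) e2 Y| = \sum_v #|Defs.sval (restr2 v e2) (sterm_at v Y)|.
Proof. by rewrite card_set_tagged; apply: eq_bigr => v _; rewrite sval_sterm_at. Qed.

Lemma sat_glue_FE x y :
  sat e1 e2 (FE _ x y) <->
  (exists v, sat_at v e1 e2 (FE _ x y)) \/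
  (exists v v' j j', sat_at v e1 e2 (FP (inr j : Uv v) x) /\
     sat_at v' e1 e2 (FP (inr j' : Uv v') y) /\ hedge (port v j) (port v' j')).
Proof.
rewrite /sat_at /restr1 /=; case: (e1 x) => [p|]; case: (e1 y) => [p'|] /=.
- split.
  + case: p => v c; case: p' => v' c'.
    case/orP=> [/andP[/eqP /= evv' e] | /existsP[j /existsP[j' /and3P[Pj Pj' e]]]].
      by left; exists v; subst v'; rewrite !proj_tagged; rewrite tagged_asE in e.
    by right; exists v, v', j, j'; rewrite !proj_tagged.
  + case=> [[v] | [v [v' [j [j' [+ []]]]]]].
      by case: projP => // c ->; case: projP => // c' -> e; rewrite /glue_edge /= eqxx tagged_asE e.
    case: projP => // c -> Pj; case: projP => // c' -> Pj' e.
    by apply/orP; right; apply/existsP; exists j; apply/existsP; exists j'; rewrite Pj Pj' e.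
all: split=> // -[[v] | [v [v' [j [j' [? [? _]]]]]]] //; by case: (proj v _).
Qed.

Lemma sat_glue_FP_inl ai x :
  sat e1 e2 (FP (inl ai) x) <-> exists v, sat_at v e1 e2 (FP (inl ai : Uv v) x).
Proof.
rewrite /sat_at /restr1 /=; case: (e1 x) => [p|] /=; last by split=> // -[].
by apply: iff_sym; apply: (ex_proj (fun v (c : component v) => mP _ (inl ai : Uv v) c)).
Qed.

Lemma sat_glue_FP_inr k x :
  sat e1 e2 (FP (inr k) x) <->
  exists v j, sat_at v e1 e2 (FP (inr j : Uv v) x) /\ hport (port v j) = k.
Proof.
rewrite /sat_at /restr1 /=; case: (e1 x) => [p|] /=; last by split=> // -[v [j []]].
split=> [|[v [j []]]].
  by case: p => v c /existsP[j /andP[Pj /eqP hk]]; exists v, j; rewrite proj_tagged.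
by case: projP => // c -> Pj hk; apply/existsP; exists j; rewrite Pj hk eqxx.
Qed.

Lemma sat_glue_FEq x y :
  sat e1 e2 (FEq _ x y) <-> exists v, sat_at v e1 e2 (FEq _ x y).
Proof.
rewrite /sat_at /restr1 /=; case: (e1 x) => [p|]; case: (e1 y) => [p'|] /=.
- split=> [<- | [v]]; first by case: p => v c; exists v; rewrite proj_tagged.
  by case: projP => // c ->; case: projP => // c' -> ->.
all: split=> // -[v]; by [| case: (proj v _)].
Qed.

Lemma sat_glue_FIn x Y :
  sat e1 e2 (FIn x Y) <-> exists v, sat_at v e1 e2 (FIn x (sterm_at v Y)).
Proof.
rewrite /sat_at /restr1 /=; case: (e1 x) => [p|] /=; last by split=> // -[].
rewrite (ex_proj (fun v c => c \in Defs.sval (restr2 v e2) (sterm_at v Y))).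
by rewrite sval_sterm_at inE; case: p.
Qed.

Lemma sat_glue_FSub Y Z :
  sat e1 e2 (FSub Y Z) <-> forall v, sat_at v e1 e2 (FSub (sterm_at v Y) (sterm_at v Z)).
Proof.
rewrite /sat_at /=; split=> [/subsetP sub v | sub].
  by rewrite !sval_sterm_at; apply/subsetP => c; rewrite !inE; apply: sub.
apply/subsetP => -[v c]; move: (sub v); rewrite !sval_sterm_at => /subsetP/(_ c).
by rewrite !inE; apply.
Qed.

End Decomposition.

End Glue.

Arguments sat_at {Sig arS X arX n G A} v e1 e2 g.

Lemma minn2_sum (I : Type) (r : seq I) (F : I -> nat) :
  minn (\sum_(i <- r) F i) 2 = minn (\sum_(i <- r) minn (F i) 2) 2.
Proof. by elim: r => [|i r IH]; rewrite ?big_nil // !big_cons; move: IH; lia. Qed.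

Section Compatibility.
Variables (Sig : finType) (arS : Sig -> nat) (X : Type) (arX : X -> nat) (n : nat).
Variables (G : hg arX n) (M : nat -> Prop).
Local Notation family := (forall x : X, model (sigU arS (arX x))).
Local Notation Uv v := (sigU arS (arX (hlab v))).

Definition comp_equiv r (A B : family) (e1 : fo_env (glue G A)) (e2 : so_env (glue G A))
    (d1 : fo_env (glue G B)) (d2 : so_env (glue G B)) :=
  forall v, sat_equiv M r (restr1 v e1) (restr2 v e2) (restr1 v d1) (restr2 v d2).

Section Atoms.
Variables (A B : family) (e1 : fo_env (glue G A)) (e2 : so_env (glue G A)).
Variables (d1 : fo_env (glue G B)) (d2 : so_env (glue G B)).
Hypothesis agree : forall v (g : form (Uv v)), qr g = 0 -> mods_in M g ->
  sat_at v e1 e2 g <-> sat_at v d1 d2 g.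

Lemma glue_equiv_FE x y : sat e1 e2 (FE _ x y) <-> sat d1 d2 (FE _ x y).
Proof.
have agreeE v : sat_at v e1 e2 (FE _ x y) <-> sat_at v d1 d2 (FE _ x y) by exact: agree.
have agreeP v (j : 'I_(arX (hlab v))) z :
  sat_at v e1 e2 (FP (inr j : Uv v) z) <-> sat_at v d1 d2 (FP (inr j : Uv v) z) by exact: agree.
by rewrite !sat_glue_FE; setoid_rewrite agreeE; setoid_rewrite agreeP.
Qed.

Lemma glue_equiv_FP u x : sat e1 e2 (FP u x) <-> sat d1 d2 (FP u x).
Proof.
case: u => [ai|k].
  have agreeP v : sat_at v e1 e2 (FP (inl ai : Uv v) x) <-> sat_at v d1 d2 (FP (inl ai : Uv v) x).
    exact: agree.
  by rewrite !sat_glue_FP_inl; setoid_rewrite agreeP.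
have agreeP v (j : 'I_(arX (hlab v))) :
  sat_at v e1 e2 (FP (inr j : Uv v) x) <-> sat_at v d1 d2 (FP (inr j : Uv v) x) by exact: agree.
by rewrite !sat_glue_FP_inr; setoid_rewrite agreeP.
Qed.

Lemma glue_equiv_FEq x y : sat e1 e2 (FEq _ x y) <-> sat d1 d2 (FEq _ x y).
Proof.
have agreeEq v : sat_at v e1 e2 (FEq _ x y) <-> sat_at v d1 d2 (FEq _ x y) by exact: agree.
by rewrite !sat_glue_FEq; setoid_rewrite agreeEq.
Qed.

Lemma glue_equiv_FIn x Y : sat e1 e2 (FIn x Y) <-> sat d1 d2 (FIn x Y).
Proof.
have agreeIn v : sat_at v e1 e2 (FIn x (sterm_at v Y)) <-> sat_at v d1 d2 (FIn x (sterm_at v Y)).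
  exact: agree.
by rewrite !sat_glue_FIn; setoid_rewrite agreeIn.
Qed.

Lemma glue_equiv_FSub Y Z : sat e1 e2 (FSub Y Z) <-> sat d1 d2 (FSub Y Z).
Proof.
have agreeSub v : sat_at v e1 e2 (FSub (sterm_at v Y) (sterm_at v Z)) <->
                  sat_at v d1 d2 (FSub (sterm_at v Y) (sterm_at v Z)) by exact: agree.
by rewrite !sat_glue_FSub; setoid_rewrite agreeSub.
Qed.

Lemma glue_equiv_FMod k m Y : M m -> (sat e1 e2 (FMod k m Y) <-> sat d1 d2 (FMod k m Y)).
Proof.
move=> Mm /=; rewrite !card_sval_glue.
suff -> : \sum_v #|Defs.sval (restr2 v e2) (sterm_at v Y)| =
          \sum_v #|Defs.sval (restr2 v d2) (sterm_at v Y)| %[mod m] by [].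
rewrite -modn_summ -[RHS]modn_summ; congr (_ %% _); apply: eq_bigr => v _.
by apply/(agree (g := FMod _ m (sterm_at v Y))).
Qed.

Lemma glue_equiv_FSing Y : sat e1 e2 (FSing Y) <-> sat d1 d2 (FSing Y).
Proof.
rewrite /= !card_sval_glue.
(* #|S| = 1 only depends on the min(#|S_v|, 2), and S_v = set0 is the rank-0 formula
   S_v <= [false]. *)
have min2 v : minn #|Defs.sval (restr2 v e2) (sterm_at v Y)| 2 =
              minn #|Defs.sval (restr2 v d2) (sterm_at v Y)| 2.
  have := agree (g := FSing (sterm_at v Y)) erefl I.
  have := agree (g := FSub (sterm_at v Y) (SConst (QFalse _))) erefl I.
  rewrite /sat_at /= -!/(set0) !subset0 -!cards_eq0.
  move: #|_| #|_| => a b eq0 eq1.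
  have {}eq0 : a = 0 <-> b = 0 by split=> /eqP/eq0/eqP.
  by move: eq0 eq1; lia.
have eq1_min2 s : s = 1 <-> minn s 2 = 1 by lia.
rewrite eq1_min2 [X in _ <-> X]eq1_min2.
rewrite (minn2_sum _ (fun v => #|Defs.sval (restr2 v e2) _|)).
by rewrite (minn2_sum _ (fun v => #|Defs.sval (restr2 v d2) _|)) (eq_bigr _ (fun v _ => min2 v)).
Qed.

End Atoms.

Lemma comp_equiv_sym r A B e1 e2 d1 d2 :
  @comp_equiv r A B e1 e2 d1 d2 -> comp_equiv r d1 d2 e1 e2.
Proof. by move=> eqv v; apply: sat_equiv_sym. Qed.

Lemma comp_equiv_agree r A B e1 e2 d1 d2 : @comp_equiv r A B e1 e2 d1 d2 ->
  forall v g, qr g = 0 -> mods_in M g -> sat_at v e1 e2 g <-> sat_at v d1 d2 g.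
Proof. by move=> eqv v g g0; apply: eqv; rewrite g0. Qed.

Lemma comp_equiv_ex1 r A B e1 e2 d1 d2 x (p : glue_elt G A) :
  @comp_equiv r.+1 A B e1 e2 d1 d2 ->
  exists p' : glue_elt G B, comp_equiv r (upd e1 x (Some p)) e2 (upd d1 x (Some p')) d2.
Proof.
case: p => v c eqv; have [c' eqv_v] := sat_equiv_ex1 x c (eqv v).
exists (Tagged (component B) c') => w; rewrite !restr1_upd.
have [-> | wv] := eqVneq w v; first by rewrite !proj_tagged.
by rewrite !proj_tagged_neq //; apply/sat_equiv_forget1/sat_equivS.
Qed.

Lemma comp_equiv_ex2 r A B e1 e2 d1 d2 Z (S : {set glue_elt G A}) :
  @comp_equiv r.+1 A B e1 e2 d1 d2 ->
  exists T : {set glue_elt G B}, comp_equiv r e1 (upd e2 Z S) d1 (upd d2 Z T).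
Proof.
move=> eqv.
have exT v : exists T : {set component B v},
    sat_equiv M r (restr1 v e1) (restr2 v (upd e2 Z S)) (restr1 v d1) (upd (restr2 v d2) Z T).
  by rewrite restr2_upd; apply: sat_equiv_ex2 (eqv v).
have [T eqvT] := non_dep_dep_functional_choice functional_choice _ _ exT.
exists [set p | tagged p \in T (tag p)] => v; rewrite [restr2 v (upd d2 _ _)]restr2_upd.
suff -> : [set c | Tagged (component B) c \in [set p | tagged p \in T (tag p)]] = T v by [].
by apply/setP => c; rewrite !inE.
Qed.

Lemma glue_sat_transfer f : mods_in M f ->
  forall r A B e1 e2 d1 d2, qr f <= r -> @comp_equiv r A B e1 e2 d1 d2 ->
  sat e1 e2 f -> sat d1 d2 f.
Proof.
elim: f => [x y|u x|x y|x Y|k m Y|Y Z|Y|g IH|g IH h IH'|x g IH|Z g IH] fM r A B e1 e2 d1 d2 fr eqv;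
  have agree := comp_equiv_agree eqv.
- exact: (glue_equiv_FE agree x y).1.
- exact: (glue_equiv_FP agree u x).1.
- exact: (glue_equiv_FEq agree x y).1.
- exact: (glue_equiv_FIn agree x Y).1.
- exact: (glue_equiv_FMod agree k Y fM).1.
- exact: (glue_equiv_FSub agree Y Z).1.
- exact: (glue_equiv_FSing agree Y).1.
- by move=> nsg sg; apply/nsg/(IH fM r _ _ _ _ _ _ fr (comp_equiv_sym eqv)).
- case: fM => gM hM; move: fr; rewrite geq_max => /andP[gr hr] [sg sh].
  by split; [apply: IH gM r _ _ _ _ _ _ gr eqv sg | apply: IH' hM r _ _ _ _ _ _ hr eqv sh].
- case: r fr eqv => // r fr eqv [p sp]; have [p' eqv'] := comp_equiv_ex1 x p eqv.
  by exists p'; apply: IH fM r _ _ _ _ _ _ fr eqv' sp.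
- case: r fr eqv => // r fr eqv [S sS]; have [T eqv'] := comp_equiv_ex2 Z S eqv.
  by exists T; apply: IH fM r _ _ _ _ _ _ fr eqv' sS.
Qed.

Lemma glue_rM_equiv r (A B : family) :
  (forall x, rM_equiv r M (A x) (B x)) -> rM_equiv r M (glue G A) (glue G B).
Proof.
move=> eqv f _ fr fM.
have eqv0 : @comp_equiv r A B (fun=> None) (fun=> set0) (fun=> None) (fun=> set0).
  by move=> v; rewrite !restr2_set0; apply: rM_equiv_sat_equiv.
by split; apply: (glue_sat_transfer fM fr); last apply: comp_equiv_sym.
Qed.

End Compatibility.

Lemma glue_floor_miso (Sig : finType) (arS : Sig -> nat) (X : Type) (arX : X -> nat) (n : nat)
    (G : hg arX n) (eta : forall x : X, hg arS (arX x)) :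
  miso (glue G (fun x => floor (eta x))) (floor (hflatten G eta)).
Proof.
pose h (p : glue_elt G (fun x => floor (eta x))) : corner (hflatten G eta) :=
  existT _ (existT _ (tag p) (tag (tagged p))) (tagged (tagged p)).
exists h; split; [|split].
- by exists (@fsplit _ _ _ _ _ G eta) => [[v [w i]] | [[v w] i]].
- move=> [v [w i]] [v' [w' i']]; rewrite /= /fedge /=; congr orb.
  apply/idP/existsP => [e | [j /existsP[j' /and3P[/eqP <- /eqP <- e]]]] //.
  exists (hport (existT _ w i)); apply/existsP; exists (hport (existT _ w' i')).
  by rewrite /= !eqxx.
- move=> [ai | k] [v [w i]] //=.
  apply/eqP/existsP => [<- | [j /andP[/eqP <- /eqP <-]]] //.
  by exists (hport (existT _ w i)); rewrite /= !eqxx.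
Qed.

Theorem lemma5p13
  (Sig : finType) (arS : Sig -> nat) (hS : forall a, 0 < arS a)
  (X : Type) (arX : X -> nat) (hX : forall x, 0 < arX x)
  (n : nat) (G : hg arX n) :
  exists f : (forall x : X, model (sigU arS (arX x))) -> model (sigU arS n),
    (forall (r : nat) (M : nat -> Prop)
            (A B : forall x : X, model (sigU arS (arX x))),
        (forall x, in_floor_image (A x)) ->
        (forall x, in_floor_image (B x)) ->
        (forall x, rM_equiv r M (A x) (B x)) ->
        rM_equiv r M (f A) (f B)) /\
    (forall eta : forall x : X, hg arS (arX x),
        miso (f (fun x => floor (eta x))) (floor (hflatten G eta))).
Proof.
exists (glue G); split.
- by move=> r M A B _ _; apply: glue_rM_equiv.
- exact: glue_floor_miso.
Qed.
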